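(* For every uniform discrete traffic crossing instance on the torus with congestion $\chi$, the worst-case asymptotic delay rate of an optimal scheduler satisfies $\rho_{opt}\ge \chi/(1+\chi)$.
   Context: Setting: a $W\times W$ square region $R$ of the integer grid, $W$ even, is embedded on a torus (a vehicle leaving $R$ on one side reappears instantly in the same lane on the opposite side). There are $m_x$ vertical lanes (vertical grid lines) and $m_y$ horizontal lanes, each assigned a direction. Vehicles occupy grid points on lanes and move along their lane in its direction; time is discrete, and at each step each vehicle either advances one unit or stays; a collision occurs if two vehicles occupy the same grid point at the same time. Intersections are crossing points of a horizontal and a vertical lane. The instance is uniform if every lane contains the same number $n'$ of vehicles (initial positions within lanes arbitrary); $p=n'/W$ is the density and $\chi=\max(0,2p-1)$ is the congestion. A vehicle experiences a delay at time $t$ if it does not move at that step; the delay rate of a collision-free schedule at time $t$ is the maximum (over vehicles) total delay up to time $t$ divided by $t$, and its asymptotic delay rate is the limit superior of the delay rate as $t\to\infty$. $\rho_{opt}=\rho_{opt}(W,p,m_x,m_y)$ denotes the worst-case (over uniform instances of this form) asymptotic delay rate achieved by an optimum (collision-free) scheduler. *)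

From HB Require Import structures.
From mathcomp Require Import all_boot all_order all_algebra.
From mathcomp Require Import all_classical all_reals.
From mathcomp Require Import topology normedtype sequences.
Set Implicit Arguments. Unset Strict Implicit. Unset Printing Implicit Defensive.
Import Order.TTheory GRing.Theory Num.Theory.

(* Grid points are pairs (x, y) : 'I_W * 'I_W (coordinates mod W).          *)
(* There are mx vertical lanes (lines x = xv i) and my horizontal lanes      *)
(* (lines y = yh j); each lane has a direction (true = increasing coord.,    *)
(* false = decreasing coord.).  A uniform instance has exactly n' vehicles   *)
(* on each lane: vehicle (inl (i, k)) is the k-th vehicle of vertical lane   *)
(* i and (inr (j, k)) the k-th vehicle of horizontal lane j.                 *)

Definition vehicle (mx my n' : nat) : finType :=
  (('I_mx * 'I_n') + ('I_my * 'I_n'))%type.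

Record instance (W mx my n' : nat) := Instance {
  xv : 'I_mx -> 'I_W;
  yh : 'I_my -> 'I_W;
  dv : 'I_mx -> bool;
  dh : 'I_my -> bool;
  pos0 : vehicle mx my n' -> 'I_W
}.

Definition wf_instance W mx my n' (I : instance W mx my n') : Prop :=
  injective (xv I) /\ injective (yh I).

(* A schedule: mv t v = true iff vehicle v advances one unit at step t
   (from time t to time t+1), otherwise it stays. *)
Definition schedule (mx my n' : nat) := nat -> vehicle mx my n' -> bool.

Definition moves mx my n' (S : schedule mx my n') (v : vehicle mx my n') (t : nat)
  : nat := \sum_(s < t) S s v.

Definition advance (W : nat) (d : bool) (o : 'I_W) (k : nat) : nat :=
  if d then (o + k) %% W else (o + (W - k %% W)) %% W.

Definition position W mx my n' (I : instance W mx my n') (S : schedule mx my n')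
    (v : vehicle mx my n') (t : nat) : nat * nat :=
  match v with
  | inl (i, _) => (nat_of_ord (xv I i), advance (dv I i) (pos0 I v) (moves S v t))
  | inr (j, _) => (advance (dh I j) (pos0 I v) (moves S v t), nat_of_ord (yh I j))
  end.

Definition collision_free W mx my n' (I : instance W mx my n') (S : schedule mx my n')
  : Prop :=
  forall (t : nat) (v w : vehicle mx my n'),
    v != w -> position I S v t <> position I S w t.

Definition delay mx my n' (S : schedule mx my n') (v : vehicle mx my n') (t : nat)
  : nat := t - moves S v t.

Definition delay_rate (R : realType) mx my n' (S : schedule mx my n') (t : nat) : R :=
  ((\max_(v : vehicle mx my n') delay S v t)%:R / t%:R)%R.

Definition asymptotic_delay_rate (R : realType) mx my n' (S : schedule mx my n')
  : \bar R :=
  limn_esup (fun t => (delay_rate R S t)%:E)%E.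

Definition density (R : realType) (W n' : nat) : R := (n'%:R / W%:R)%R.
Definition congestion (R : realType) (W n' : nat) : R :=
  (Num.max 0 (2 * density R W n' - 1))%R.

From HB Require Import structures.
From mathcomp Require Import all_boot all_order all_algebra.
From mathcomp Require Import all_classical all_reals.
From mathcomp Require Import topology normedtype sequences.
From mathcomp Require Import ereal zify ring lra.
Import Order.TTheory GRing.Theory Num.Theory.
Import numFieldNormedType.Exports.
Set Implicit Arguments. Unset Strict Implicit.
Local Open Scope classical_set_scope.

(* Fix a vertical lane and a horizontal lane and look at their intersection c.
   A vehicle that has advanced m times has gone round its lane floor(m/W) times,
   so it has stood on c at least floor(m/W) times.  If the maximal delay up to
   time T is D, each of the 2n' vehicles of the two lanes has advanced at least
   T - D times, and since c holds at most one vehicle at a time,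
   2n' floor((T-D)/W) <= T + 1.  Hence D/T >= 1 - W/(2n') - O(1/T), and
   1 - W/(2n') = (2p-1)/(2p) = chi/(1+chi) when chi > 0. *)

Lemma sum_residue_mulnW (W r q : nat) : (r < W)%N ->
  \sum_(k < q * W) (k %% W == r : nat) = q.
Proof.
move=> rW; elim: q => [|q IH]; first by rewrite mul0n big_ord0.
rewrite mulSn addnC -(big_mkord xpredT (fun k => (k %% W == r : nat))).
rewrite (big_cat_nat _ (n := q * W)) ?leq_addr //= big_mkord IH -addn1.
congr (_ + _).
rewrite -[in LHS](add0n (q * W)) big_addn addKn big_mkord.
rewrite (eq_bigr (fun k : 'I_W => (k == Ordinal rW : nat))); last first.
  by move=> k _; rewrite addnC modnMDl modn_small.
by rewrite (bigD1 (Ordinal rW)) //= eqxx big1 ?addn0 // => k /negbTE ->.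
Qed.

Lemma divn_le_sum_residue (W r M : nat) : (r < W)%N ->
  (M %/ W <= \sum_(k < M.+1) (k %% W == r : nat))%N.
Proof.
move=> rW; rewrite -{1}(sum_residue_mulnW (M %/ W) rW).
rewrite -!(big_mkord xpredT (fun k => (k %% W == r : nat))).
rewrite [X in (_ <= X)%N](big_cat_nat _ (n := M %/ W * W)) ?leq_addr //.
by rewrite ltnW // ltnS leq_divM.
Qed.

Lemma sum_range_le_sum_path (m : nat -> nat) (P : pred nat) T :
  m 0 = 0 -> (forall t, m t.+1 = m t \/ m t.+1 = (m t).+1) ->
  (\sum_(k < (m T).+1) P k <= \sum_(t < T.+1) P (m t))%N.
Proof.
move=> m0 step; elim: T => [|T IH]; first by rewrite m0 !big_ord1 /= m0.
rewrite [X in (_ <= X)%N]big_ord_recr /=.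
case: (step T) => ->; first exact: leq_trans IH (leq_addr _ _).
by rewrite big_ord_recr /= leq_add2r.
Qed.

Lemma sum_nat_bool_le1 (T : finType) (q : pred T) :
  {in q &, forall x y, x = y} -> (\sum_(x : T) (q x : nat) <= 1)%N.
Proof.
move=> qinj; rewrite -big_mkcondr sum1_card.
by apply/card_le1_eqP => x y xq yq; apply: qinj.
Qed.

Lemma leq_sum_fiber (A B : finType) (G : A * B -> nat) (a : A) :
  (\sum_(b : B) G (a, b) <= \sum_(p : A * B) G p)%N.
Proof.
have -> : \sum_(p : A * B) G p = \sum_(x : A) \sum_(y : B) G (x, y).
  by rewrite pair_big; apply: eq_bigr => -[].
by rewrite (bigD1 a) //= leq_addr.
Qed.

Lemma muln_le_of_divn (a b x W : nat) : (0 < W)%N ->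
  (a * (x %/ W) <= b)%N -> (a * x <= W * b + a * W)%N.
Proof.
move=> W0 le_ab; rewrite {1}(divn_eq x W) mulnDr mulnA leq_add //.
  by rewrite mulnC leq_mul2l le_ab orbT.
by rewrite leq_mul2l ltnW ?ltn_pmod ?orbT.
Qed.

Lemma advance_eq_residue (W : nat) (d : bool) (o : 'I_W) (c : nat) : (c < W)%N ->
  exists2 r, (r < W)%N & forall k, (advance d o k == c) = (k %% W == r).
Proof.
move=> cW; have oW := ltn_ord o; rewrite /advance; case: d.
- exists ((c + (W - o)) %% W); first by rewrite ltn_mod; lia.
  move=> k; have oc : (o + (c + (W - o))) %% W = c.
    by rewrite addnCA subnKC ?(ltnW oW) // modnDr modn_small.
  by rewrite -{1}oc eqn_modDl.
- exists ((o + W - c) %% W); first by rewrite ltn_mod; lia.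
  move=> k; have kW : (k %% W < W)%N by rewrite ltn_mod; lia.
  have -> : ((o + (W - k %% W)) %% W == c) =
      (o + (W - k %% W) + k %% W == c + k %% W %[mod W]).
    by rewrite eqn_modDr (modn_small cW).
  rewrite -addnA subnK ?(ltnW kW) //.
  have -> : o + W = c + (o + W - c) by lia.
  by rewrite eqn_modDl addKn modn_mod eq_sym.
Qed.

Section Moves.
Variables (mx my n' : nat) (S : schedule mx my n').

Lemma moves0 v : moves S v 0 = 0.
Proof. by rewrite /moves big_ord0. Qed.

Lemma movesS v t : moves S v t.+1 = moves S v t \/ moves S v t.+1 = (moves S v t).+1.
Proof.
by rewrite /moves big_ord_recr /=; case: (S t v); [right; rewrite addn1 | left; rewrite addn0].
Qed.

Lemma moves_le v t : (moves S v t <= t)%N.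
Proof.
by rewrite /moves -[X in (_ <= X)%N]card_ord -sum1_card leq_sum // => s _; case: (S s v).
Qed.

Lemma sub_max_delay_le_moves v t :
  (t - \max_(w : vehicle mx my n') delay S w t <= moves S v t)%N.
Proof.
have : (delay S v t <= \max_(w : vehicle mx my n') delay S w t)%N by apply: leq_bigmax.
by rewrite /delay; have := moves_le v t; lia.
Qed.

(* Along its lane the coordinate of v runs through all residues mod W. *)
Lemma divn_moves_le_visits (W : nat) (d : bool) (o : 'I_W) (c : nat) v T : (c < W)%N ->
  (moves S v T %/ W <= \sum_(t < T.+1) (advance d o (moves S v t) == c : nat))%N.
Proof.
move=> cW; have [r rW adv_r] := advance_eq_residue d o cW.
under eq_bigr do rewrite adv_r.
apply: leq_trans (divn_le_sum_residue (moves S v T) rW) _.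
exact: (sum_range_le_sum_path (fun k => k %% W == r) T (moves0 v) (movesS v)).
Qed.

End Moves.

Lemma intersection_visits_bound W mx my n' (I : instance W mx my n')
    (S : schedule mx my n') (i0 : 'I_mx) (j0 : 'I_my) (m T : nat) :
  collision_free I S -> (forall v, m <= moves S v T)%N ->
  (2 * n' * (m %/ W) <= T.+1)%N.
Proof.
move=> cf m_le.
pose c := (nat_of_ord (xv I i0), nat_of_ord (yh I j0)).
pose visits v := \sum_(t < T.+1) (position I S v t == c : nat).
have occupancy : (\sum_v visits v <= T.+1)%N.
  rewrite exchange_big /= -[X in (_ <= X)%N]card_ord -sum1_card leq_sum // => t _.
  apply: sum_nat_bool_le1 => v w /eqP vc /eqP wc.
  by apply/eqP/negPn/negP => /(cf t); rewrite vc wc.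
have lane_v k : (m %/ W <= visits (inl (i0, k)))%N.
  apply: leq_trans (leq_div2r W (m_le _)) _; rewrite /visits /position.
  under eq_bigr do rewrite xpair_eqE eqxx /=.
  exact: divn_moves_le_visits.
have lane_h k : (m %/ W <= visits (inr (j0, k)))%N.
  apply: leq_trans (leq_div2r W (m_le _)) _; rewrite /visits /position.
  under eq_bigr do rewrite xpair_eqE eqxx andbT.
  exact: divn_moves_le_visits.
apply: leq_trans occupancy; rewrite big_sumType /= -mulnA mulnC muln2 -addnn.
rewrite leq_add //; apply: leq_trans (leq_sum_fiber _ _);
  rewrite -[X in (X * _ <= _)%N]card_ord -sum_nat_const; exact: leq_sum.
Qed.

Lemma le_limn_esup (R : realType) (u v : (\bar R)^nat) :
  (\forall n \near \oo, u n <= v n)%E -> (limn_esup u <= limn_esup v)%E.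
Proof.
move=> [N _ uv]; rewrite !limn_esup_lim; apply: lee_lim; try exact: is_cvg_esups.
exists N => // n /= Nn; apply: ge_ereal_sup => _ [k /= nk <-].
apply: le_trans (uv k (leq_trans Nn nk)) _.
by apply: ereal_sup_ubound; exists k.
Qed.

Lemma limn_esup_ge_sub_inv (R : realType) (u : R^nat) (a C : R) :
  (forall n, (0 < n)%N -> a - C / n%:R <= u n)%R ->
  (a%:E <= limn_esup (fun n => (u n)%:E))%E.
Proof.
move=> ub; pose w n := (a - C / n%:R)%R.
have w_cvg : w n @[n --> \oo] --> a.
  rewrite -cvg_shiftS /=; have -> : a = (a - C * 0)%R by rewrite mulr0 subr0.
  by apply: cvgB; [exact: cvg_cst | apply: cvgMl_tmp; exact: cvg_harmonic].
have wE : limn_esup (fun n => (w n)%:E) = a%:E.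
  by apply: (cvg_limn_einf_sup _).2; apply: cvg_EFin => //; exact: nearW.
by rewrite -wE; apply: le_limn_esup; exists 1%N => // n /= n0; rewrite lee_fin ub.
Qed.

Lemma congestion_eq0 (R : realType) (W n' : nat) : (0 < W)%N -> (2 * n' <= W)%N ->
  congestion R W n' = 0%R.
Proof.
move=> W0 nW; rewrite /congestion /density mulrA /Order.max ifF //.
by apply/negbTE; rewrite -leNgt subr_le0 ler_pdivrMr ?ltr0n // mul1r -natrM ler_nat.
Qed.

Lemma congestion_ratioE (R : realType) (W n' : nat) : (0 < W)%N -> (W < 2 * n')%N ->
  (congestion R W n' / (1 + congestion R W n') = 1 - W%:R / (2 * n'%:R))%R.
Proof.
move=> W0 nW; have n0 : (0 < n')%N by lia.
rewrite /congestion /density mulrA /Order.max ifT; last first.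
  by rewrite subr_gt0 ltr_pdivlMr ?ltr0n // mul1r -natrM ltr_nat.
by rewrite [(1 + _)%R]addrC subrK; field; rewrite !pnatr_eq0 -!lt0n W0 n0.
Qed.

Lemma congestion_ratio_le (R : realType) (W n' T D : nat) :
  (0 < W)%N -> (0 < T)%N -> (D <= T)%N ->
  (2 * n' * (T - D) <= W * T.+1 + 2 * n' * W)%N ->
  (congestion R W n' / (1 + congestion R W n') - 2 * W%:R / T%:R <= D%:R / T%:R)%R.
Proof.
move=> W0 T0 DT bound.
have Tp : (0 < T%:R :> R)%R by rewrite ltr0n.
have Wp : (0 < W%:R :> R)%R by rewrite ltr0n.
case: (leqP (2 * n') W) => nW.
  rewrite congestion_eq0 // addr0 mul0r sub0r; apply: le_trans (_ : 0 <= _)%R.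
    by rewrite oppr_le0 divr_ge0 // mulr_ge0 // ler0n.
  by rewrite divr_ge0 ?ler0n.
have Np : (1 <= n'%:R :> R)%R by rewrite ler1n; lia.
have boundR : (2 * n'%:R * (T%:R - D%:R) <= W%:R * (T%:R + 1) + 2 * n'%:R * W%:R :> R)%R.
  by move: bound; rewrite -(ler_nat R) natrD !natrM natrB // -(addn1 T) natrD.
rewrite congestion_ratioE // -subr_le0.
have -> : (1 - W%:R / (2 * n'%:R) - 2 * W%:R / T%:R - D%:R / T%:R
    = (2 * n'%:R * T%:R - W%:R * T%:R - 4 * n'%:R * W%:R - 2 * n'%:R * D%:R)
      / (2 * n'%:R * T%:R) :> R)%R.
  by field; rewrite !gt_eqF //; lra.
by apply: mulr_le0_ge0; [nra | rewrite invr_ge0; nra].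
Qed.

Theorem mainTheorem9 (R : realType) (W mx my n' : nat)
    (I : instance W mx my n') (S : schedule mx my n') :
  (0 < W)%N -> ~~ odd W -> (0 < mx)%N -> (0 < my)%N -> (mx <= W)%N -> (my <= W)%N ->
  wf_instance I ->
  collision_free I S ->
  ((congestion R W n' / (1 + congestion R W n'))%:E <= asymptotic_delay_rate R S)%E.
Proof.
move=> W0 _ mx0 my0 _ _ _ cf.
apply: (limn_esup_ge_sub_inv (C := (2 * W%:R)%R)) => T T0.
rewrite /delay_rate; apply: congestion_ratio_le => //.
  by apply/bigmax_leqP => v _; rewrite /delay leq_subr.
apply: muln_le_of_divn => //.
apply: (intersection_visits_bound (Ordinal mx0) (Ordinal my0) cf).
move=> v; exact: sub_max_delay_le_moves.
Qed.
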